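(* Let $(S,\mathcal{S})$ be a measurable space, let $\mathcal{E}\subseteq \mathcal{P}(S)$ be a $\cap$-stable collection with $\sigma(\mathcal{E})=\mathcal{S}$, and let $\pi_{1},\pi_{2}:\Omega\to C(S)$ be two cr-sets. Suppose $\pi_{1}$ and $\pi_{2}$ are both $\sigma$-finite on $\mathcal{E}$ and satisfy \[ P_{\pi_{1}}(N_{A_{1}}=k_{1},\ldots, N_{A_{n}}=k_{n})=P_{\pi_{2}}(N_{A_{1}}=k_{1},\ldots, N_{A_{n}}=k_{n})\] for all $n\in \mathbb{N}$, all $A_{1},\ldots,A_{n}\in\mathcal{E}$ and all $k_{1},\ldots,k_{n}\in\mathbb{N}_{0}\cup\{\infty\}$. Then $P_{\pi_{1}}=P_{\pi_{2}}$.
   Context: $(\Omega,\mathcal{F},P)$ is a probability space. $C(S)$ denotes the set of all countable (finite or denumerable) subsets of $S$. For $A\subseteq S$, $N_A:C(S)\to\mathbb{N}_0\cup\{\infty\}$, $M\mapsto |A\cap M|$. $\mathcal{C}(\mathcal{S})$ is the smallest $\sigma$-field on $C(S)$ making all $N_A$, $A\in\mathcal{S}$, measurable. A countable random set (cr-set) is an $\mathcal{F}$-$\mathcal{C}(\mathcal{S})$ measurable map $\pi:\Omega\to C(S)$; $P_\pi$ denotes its law on $(C(S),\mathcal{C}(\mathcal{S}))$. A map $\tau:\Omega\to C(S)$ is finite if $|\tau(\omega)|<\infty$ for all $\omega$, and is $\sigma$-finite on $\mathcal{E}\subseteq\mathcal{S}$ if there are $A_n\in\mathcal{E}$, $n\in\mathbb{N}$,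 with $S=\bigcup_n A_n$ such that $|\tau(\omega)\cap A_n|<\infty$ for all $\omega\in\Omega$ and all $n$. *)

From HB Require Import structures.
From mathcomp Require Import all_boot all_order all_algebra.
From mathcomp Require Import all_classical all_reals all_analysis.
Set Implicit Arguments. Unset Strict Implicit. Unset Printing Implicit Defensive.
Import Order.TTheory GRing.Theory Num.Theory.
Local Open Scope classical_set_scope.
Local Open Scope ring_scope.
Local Open Scope card_scope.

(* N_0 ∪ {∞}: [Some k] is the finite value k, [None] is ∞. *)
Definition natinf := option nat.

Definition CS (S : Type) := {M : set S | countable M}.

Definition NA_eq {S : Type} (A : set S) (M : set S) (k : natinf) : Prop :=
  match k with
  | Some n => (A `&` M) #= `I_n
  | None => ~ finite_set (A `&` M)
  end.

Definition Csigma {d} {S : measurableType d} : set (set (CS S)) :=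
  <<s [set B | exists A : set S, exists k : natinf,
         measurable A /\ B = [set M : CS S | NA_eq A (proj1_sig M) k]] >>.

Definition crset {d d'} {S : measurableType d} {Om : measurableType d'}
  (pi : Om -> CS S) : Prop :=
  forall B, Csigma B -> measurable (pi @^-1` B).

Definition law {d d'} {S : measurableType d} {Om : measurableType d'}
  {R : realType} (P : probability Om R) (pi : Om -> CS S)
  (B : set (CS S)) : \bar R := P (pi @^-1` B).

Definition sigma_finite_on {S : Type} {Om : Type} (E : set (set S))
  (pi : Om -> CS S) : Prop :=
  exists A : nat -> set S, (forall n, E (A n)) /\ \bigcup_n A n = setT /\
    forall w n, finite_set (proj1_sig (pi w) `&` A n).

From HB Require Import structures.
From mathcomp Require Import all_boot all_order all_algebra finmap.
From mathcomp Require Import all_classical all_reals all_analysis.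
From Stdlib Require Cantor.
Set Implicit Arguments. Unset Strict Implicit. Unset Printing Implicit Defensive.
Local Open Scope classical_set_scope.
Local Open Scope card_scope.

(* Both laws agree on the cylinder sets [N_A1 = k1, ..., N_An = kn] with all
   [Ai] in [E]; these form a ∩-stable class, so by the π-λ theorem the laws
   agree on the σ-field it generates.  That σ-field may be strictly smaller than
   𝒞(𝒮), but both cr-sets take their values in the set of [M] that meet every
   [B j] of a common countable [E]-cover in a finite set, and on that set every
   𝒞(𝒮)-event coincides with an event of the cylinder σ-field.  For this,
   first [N_(A ∩ B j)] is handled by a Dynkin argument in [A] (starting from
   [A ∈ E]), then [N_(A ∩ (B 0 ∪ ... ∪ B (N-1)))] by induction on [N], and
   finally [N_A = k] is read off as the eventual value of the latter. *)

Lemma nondecreasing_seq_subset {T : Type} (F : nat -> set T) m n :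
  nondecreasing_seq F -> (m <= n)%N -> F m `<=` F n.
Proof. by move=> ndF mn; apply/subsetPset/ndF. Qed.

Section fcard.
Context {T : choiceType}.
Implicit Types (X Y : set T) (F : nat -> set T).

Definition fcard X : nat := #|` fset_set X|%fset.

Lemma fcard_eqI X n : finite_set X -> X #= `I_n <-> fcard X = n.
Proof.
move=> finX; split; first exact: card_fset_set.
move=> <-; apply/(fcard_eq finX (finite_II _)).
by rewrite (card_fset_set (card_eqxx _)).
Qed.

Lemma fcardD X Y :
  finite_set X -> Y `<=` X -> fcard (X `\` Y) = (fcard X - fcard Y)%N.
Proof.
move=> finX YX; have finY := sub_finite_set YX finX.
by rewrite /fcard fset_setD // cardfsDS // -fset_set_sub.
Qed.

Lemma fcardU X Y : finite_set X -> finite_set Y -> X `&` Y = set0 ->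
  fcard (X `|` Y) = (fcard X + fcard Y)%N.
Proof.
move=> finX finY XY0.
by rewrite /fcard fset_setU // cardfsU -fset_setI // XY0 fset_set0 cardfs0 subn0.
Qed.

Lemma fcard_subset_eq X Y : finite_set Y -> X `<=` Y -> fcard X = fcard Y -> X = Y.
Proof.
move=> finY XY eXY; have : fcard (Y `\` X) = 0%N by rewrite fcardD // eXY subnn.
move=> /cardfs0_eq /fset_set_set0; rewrite setD_eq0 => /(_ (finite_setD _ finY)) YX.
exact/seteqP.
Qed.

Lemma nondecreasing_bigcup_finite F : nondecreasing_seq F ->
  finite_set (\bigcup_i F i) -> exists N, \bigcup_i F i `<=` F N.
Proof.
move=> ndF finU.
have [idx Fidx] : {idx : T -> nat & forall x, (\bigcup_i F i) x -> F (idx x) x}.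
  apply: (@choice _ _ (fun x i => (\bigcup_i F i) x -> F i x)) => x.
  by have [[i _ Fix]|nUx] := pselect ((\bigcup_i F i) x); [exists i | exists 0%N].
exists (\max_(x <- fset_set (\bigcup_i F i)) idx x)%N => x Ux.
apply: nondecreasing_seq_subset ndF _ _ (Fidx x Ux).
by apply: leq_bigmax_seq => //; rewrite in_fset_set // inE.
Qed.

Lemma card_nondecreasing_bigcupP F n : nondecreasing_seq F ->
  (forall i, finite_set (F i)) ->
  \bigcup_i F i #= `I_n <-> exists N, forall i, (N <= i)%N -> fcard (F i) = n.
Proof.
move=> ndF finF; split => [Un|[N FNn]].
- have finU : finite_set (\bigcup_i F i) by apply/finite_setP; exists n.
  have [N UFN] := nondecreasing_bigcup_finite ndF finU.
  exists N => i Ni; suff -> : F i = \bigcup_i F i by exact: card_fset_set.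
  apply/seteqP; split; first exact: bigcup_sup.
  exact: subset_trans UFN (nondecreasing_seq_subset ndF Ni).
- have FN i : (N <= i)%N -> F i = F N.
    move=> Ni; apply/esym/fcard_subset_eq => //; first exact: nondecreasing_seq_subset.
    by rewrite !FNn.
  suff -> : \bigcup_i F i = F N by apply/fcard_eqI => //; exact: FNn.
  apply/seteqP; split => [x [i _ Fix]|]; last exact: bigcup_sup.
  rewrite -(FN (maxn i N)) ?leq_maxr //.
  exact: nondecreasing_seq_subset ndF (leq_maxl i N) _ Fix.
Qed.

End fcard.

Section trace.
Context d (X : measurableType d) (T : set X).
Implicit Types Y : set X.

Definition trace_measurable Y := exists2 Z, measurable Z & Y `&` T = Z `&` T.

Definition trace_measurable_nat (f : X -> nat) :=
  forall n, trace_measurable [set x | f x = n].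

Lemma trace_measurable_eq Y Y' : (forall x, T x -> Y x <-> Y' x) ->
  trace_measurable Y' -> trace_measurable Y.
Proof.
move=> YY' [Z mZ Y'Z]; exists Z => //; rewrite -Y'Z.
by apply/seteqP; split => x [Yx Tx]; split => //; apply/(YY' x Tx).
Qed.

Lemma trace_measurable_cst (P : Prop) : trace_measurable [set _ | P].
Proof.
have [p|np] := pselect P.
  by exists setT => //; congr (_ `&` _); apply/seteqP; split.
by exists set0 => //; congr (_ `&` _); apply/seteqP; split.
Qed.

Lemma trace_measurableC Y : trace_measurable Y -> trace_measurable (~` Y).
Proof.
move=> [Z mZ YZ]; exists (~` Z); first exact: measurableC.
apply/seteqP; split => x [nYx Tx]; split => // + ; apply: contra_not nYx => ?.
- by have [] : (Y `&` T) x by rewrite YZ.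
- by have [] : (Z `&` T) x by rewrite -YZ.
Qed.

Lemma trace_measurable_bigcup (F : nat -> set X) :
  (forall n, trace_measurable (F n)) -> trace_measurable (\bigcup_n F n).
Proof.
move=> mF; have /choice[Z FZ] : forall n, exists Z, measurable Z /\ F n `&` T = Z `&` T.
  by move=> n; have [Z] := mF n; exists Z.
exists (\bigcup_n Z n); first by apply: bigcupT_measurable => n; case: (FZ n).
by rewrite !setI_bigcupl; apply: eq_bigcupr => n _; case: (FZ n).
Qed.

Lemma trace_measurableI Y Y' :
  trace_measurable Y -> trace_measurable Y' -> trace_measurable (Y `&` Y').
Proof.
move=> [Z mZ YZ] [Z' mZ' YZ']; exists (Z `&` Z'); first exact: measurableI.
by rewrite -[in LHS](setIid T) setIACA YZ YZ' setIACA setIid.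
Qed.

Lemma trace_measurable_bigcap (F : nat -> set X) :
  (forall n, trace_measurable (F n)) -> trace_measurable (\bigcap_n F n).
Proof.
move=> mF; rewrite -[\bigcap_n F n]setCK setC_bigcap.
by apply/trace_measurableC/trace_measurable_bigcup => n; exact: trace_measurableC.
Qed.

Lemma trace_measurable_sigma_algebra : sigma_algebra setT trace_measurable.
Proof.
split; first by exists set0.
- by move=> Y mY; rewrite setTD; exact: trace_measurableC.
- exact: trace_measurable_bigcup.
Qed.

Lemma trace_measurable_nat_comp2 (f g : X -> nat) (h : nat -> nat -> nat) :
  trace_measurable_nat f -> trace_measurable_nat g ->
  trace_measurable_nat (fun x => h (f x) (g x)).
Proof.
move=> mf mg n.
rewrite (_ : [set x | _] = \bigcup_m \bigcup_m'
    ([set x | f x = m] `&` [set x | g x = m'] `&` [set _ | h m m' = n])).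
  do 2 apply: trace_measurable_bigcup => ?.
  apply: trace_measurableI; last exact: trace_measurable_cst.
  exact: trace_measurableI.
apply/seteqP; split => [x <-|x [_ _ [_ _ [[/= <- <-]]]]] //.
by exists (f x) => //; exists (g x).
Qed.

Lemma trace_measurable_eventually (f : nat -> X -> nat) n :
  (forall i, trace_measurable [set x | f i x = n]) ->
  trace_measurable [set x | exists N, forall i, (N <= i)%N -> f i x = n].
Proof.
move=> mf; rewrite (_ : [set x | _] =
    \bigcup_N \bigcap_i [set x | (N <= i)%N -> f i x = n]); last first.
  apply/seteqP; split => x [N]; first by move=> fx; exists N => // i _; exact: fx.
  by move=> _ fx; exists N => i; exact: fx.
apply: trace_measurable_bigcup => N; apply: trace_measurable_bigcap => i.
have [Ni|iN] := leqP N i.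
- by apply: trace_measurable_eq (mf i) => x _ /=; split => [/(_ isT)|].
- by apply: trace_measurable_eq (trace_measurable_cst True) => x _.
Qed.

Lemma trace_preimage {U : Type} (f : U -> X) Y Z :
  (forall u, T (f u)) -> Y `&` T = Z `&` T -> f @^-1` Y = f @^-1` Z.
Proof.
move=> Tf YZ; apply/seteqP; split => u fu.
- by have [] : (Z `&` T) (f u) by rewrite -YZ.
- by have [] : (Y `&` T) (f u) by rewrite YZ.
Qed.

End trace.

Lemma preimage_probability_unique d (Om : measurableType d) (R : realType)
    (P : probability Om R) (X : Type) (G : set (set X)) (f1 f2 : Om -> X) :
  setI_closed G ->
  (forall A, <<s G >> A -> measurable (f1 @^-1` A)) ->
  (forall A, <<s G >> A -> measurable (f2 @^-1` A)) ->
  (forall A, G A -> P (f1 @^-1` A) = P (f2 @^-1` A)) ->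
  forall A, <<s G >> A -> P (f1 @^-1` A) = P (f2 @^-1` A).
Proof.
move=> GI mf1 mf2 Pf12.
pose H := [set A | [/\ measurable (f1 @^-1` A), measurable (f2 @^-1` A)
                     & P (f1 @^-1` A) = P (f2 @^-1` A)]].
suff sGH : <<s G >> `<=` H by move=> A /sGH[].
rewrite {}/H.
apply: (lambda_system_subset GI) => //; last first.
  move=> A GA; have sGA := sub_sigma_algebra GA.
  by split; [exact: mf1|exact: mf2|exact: Pf12].
split => //.
- by split; rewrite ?preimage_setT //; exact: measurableT.
- move=> A B BA [mA1 mA2 eA] [mB1 mB2 eB].
  have PD (f : Om -> X) : measurable (f @^-1` A) -> measurable (f @^-1` B) ->
      P (f @^-1` A `\` f @^-1` B) = (P (f @^-1` A) - P (f @^-1` B))%E.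
    move=> mA mB; rewrite measureD //; first by rewrite setIidr //; exact: preimage_subset.
    exact: Order.POrderTheory.le_lt_trans (probability_le1 P mA) (ltry _).
  by split; [exact: measurableD|exact: measurableD|rewrite !PD // eA eB].
- move=> F ndF HF.
  have mF1 n : measurable (f1 @^-1` F n) by case: (HF n).
  have mF2 n : measurable (f2 @^-1` F n) by case: (HF n).
  have cvgP (f : Om -> X) : (forall n, measurable (f @^-1` F n)) ->
      P (f @^-1` F n) @[n --> \oo] --> P (f @^-1` \bigcup_n F n).
    move=> mF; rewrite preimage_bigcup; apply: nondecreasing_cvg_mu => //.
      exact: bigcupT_measurable.
    by move=> m n mn; apply/subsetPset => x Fmx; exact: nondecreasing_seq_subset ndF mn _ Fmx.
  have e : (fun n => P (f1 @^-1` F n)) = (fun n => P (f2 @^-1` F n)).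
    by apply/funext => n; case: (HF n).
  split; try by rewrite preimage_bigcup; exact: bigcupT_measurable.
  rewrite -(cvg_lim (@ereal_hausdorff _) (cvgP _ mF1)).
  by rewrite -(cvg_lim (@ereal_hausdorff _) (cvgP _ mF2)) e.
Qed.

(* Makes σ-fields on C(S) available as measurable types via [g_sigma_algebraType]. *)
Section CS_pointed.
Variable S : Type.
HB.instance Definition _ := gen_eqMixin (CS S).
HB.instance Definition _ := gen_choiceMixin (CS S).
HB.instance Definition _ := isPointed.Build (CS S) (exist _ set0 (@countable0 S)).
End CS_pointed.

Definition finite_on {S : Type} (B : nat -> set S) : set (CS S) :=
  [set M | forall j, finite_set (B j `&` proj1_sig M)].

Lemma sigma_finite_on_common_cover (S Om : Type) (E : set (set S))
    (pi1 pi2 : Om -> CS S) :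
  setI_closed E -> sigma_finite_on E pi1 -> sigma_finite_on E pi2 ->
  exists B : nat -> set S, [/\ forall j, E (B j), \bigcup_j B j = setT,
    forall w, finite_on B (pi1 w) & forall w, finite_on B (pi2 w)].
Proof.
move=> EI [A1 [EA1 [A1cover finA1]]] [A2 [EA2 [A2cover finA2]]].
exists (fun j => A1 (Cantor.of_nat j).1 `&` A2 (Cantor.of_nat j).2); split.
- by move=> j; exact: EI.
- apply/seteqP; split => // x _.
  have [a _ A1x] : (\bigcup_n A1 n) x by rewrite A1cover.
  have [b _ A2x] : (\bigcup_n A2 n) x by rewrite A2cover.
  by exists (Cantor.to_nat (a, b)) => //; rewrite Cantor.cancel_of_to.
- move=> w j; apply: sub_finite_set (finA1 w (Cantor.of_nat j).1).
  by move=> x [[A1x _] wx]; split.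
- move=> w j; apply: sub_finite_set (finA2 w (Cantor.of_nat j).2).
  by move=> x [[_ A2x] wx]; split.
Qed.

Section cylinder.
Context d (S : measurableType d).
Implicit Types (E : set (set S)) (A : set S) (M : CS S).

Definition cylinder E : set (set (CS S)) :=
  [set Y | exists n (A : nat -> set S) (k : nat -> natinf),
     (forall i, (i < n)%N -> E (A i)) /\
     Y = [set M | forall i, (i < n)%N -> NA_eq (A i) (proj1_sig M) (k i)]].

Lemma cylinder_NA_eq E A k : E A -> cylinder E [set M | NA_eq A (proj1_sig M) k].
Proof.
move=> EA; exists 1%N, (fun=> A), (fun=> k); split => //.
by apply/seteqP; split => [M AMk [|//]|M /(_ 0%N isT)].
Qed.

Lemma cylinder_setI_closed E : setI_closed (cylinder E).
Proof.
move=> _ _ [n1 [A1 [k1 [EA1 ->]]]] [n2 [A2 [k2 [EA2 ->]]]].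
exists (n1 + n2)%N, (fun i => if (i < n1)%N then A1 i else A2 (i - n1)%N),
  (fun i => if (i < n1)%N then k1 i else k2 (i - n1)%N); split.
  move=> i lti; case: ltnP => [|le_n1i]; first exact: EA1.
  by apply: EA2; rewrite ltn_subLR.
apply/seteqP; split => M /=.
  move=> [M1 M2] i lti; case: ltnP => [|le_n1i]; first exact: M1.
  by apply: M2; rewrite ltn_subLR.
move=> M12; split => i lti; first by have := M12 i (ltn_addr _ lti); rewrite lti.
have := M12 (n1 + i)%N; rewrite ltn_add2l => /(_ lti).
by rewrite ltnNge leq_addr /= addKn.
Qed.

Lemma cylinder_Csigma E : E `<=` measurable -> <<s cylinder E >> `<=` @Csigma d S.
Proof.
move=> Em; apply: smallest_sub; first exact: smallest_sigma_algebra.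
move=> _ [n [A [k [EA ->]]]].
apply: (@bigcap_measurableType _ (g_sigma_algebraType _)) => i lti.
by apply: sub_sigma_algebra; exists (A i), (k i); split => //; exact/Em/EA.
Qed.

(* Junk value: [NA_card A M = 0] when [A `&` M] is infinite. *)
Definition NA_card A M : nat := fcard (A `&` proj1_sig M).

Lemma NA_eq_nondecreasing_bigcup (F : nat -> set S) M n :
  nondecreasing_seq F -> (forall i, finite_set (F i `&` proj1_sig M)) ->
  NA_eq (\bigcup_i F i) (proj1_sig M) (Some n) <->
  exists N, forall i, (N <= i)%N -> NA_card (F i) M = n.
Proof.
move=> ndF finF; rewrite /NA_eq setI_bigcupl; apply: card_nondecreasing_bigcupP => //.
move=> i j ij; apply/subsetPset; apply: setSI; exact: nondecreasing_seq_subset.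
Qed.

End cylinder.

Section cylinder_trace.
Context d (S : measurableType d) (E : set (set S)).
Hypotheses (EI : setI_closed E) (Egen : <<s E >> = @measurable d S).
Variable B : nat -> set S.
Hypotheses (EB : forall j, E (B j)) (Bcover : \bigcup_j B j = setT).

Local Notation CSE := (g_sigma_algebraType (cylinder E)).
Local Notation tm := (@trace_measurable _ CSE (finite_on B)).
Local Notation tm_nat := (@trace_measurable_nat _ CSE (finite_on B)).
Local Notation D N := (\big[setU/set0]_(j < N) B j).

Let measurable_E A : E A -> measurable A.
Proof. by rewrite -Egen; exact: sub_sigma_algebra. Qed.

Let finite_on_subset A M j :
  finite_on B M -> A `<=` B j -> finite_set (A `&` proj1_sig M).
Proof. by move=> finM AB; apply: sub_finite_set (finM j) => x [/AB]. Qed.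

Lemma trace_measurable_NA_card_E A : E A ->
  (forall M, finite_on B M -> finite_set (A `&` proj1_sig M)) -> tm_nat (NA_card A).
Proof.
move=> EA finA n.
apply: (@trace_measurable_eq _ CSE _ _ [set M | NA_eq A (proj1_sig M) (Some n)]).
  by move=> M /finA finAM; symmetry; exact: fcard_eqI.
exists [set M | NA_eq A (proj1_sig M) (Some n)] => //.
exact: sub_sigma_algebra (cylinder_NA_eq _ EA).
Qed.

Lemma trace_measurable_NA_card_piece j A :
  measurable A -> tm_nat (NA_card (A `&` B j)).
Proof.
have finAB A' M : finite_on B M -> finite_set (A' `&` B j `&` proj1_sig M).
  by move=> finM; apply: (@finite_on_subset _ _ j finM) => x [].
pose H := [set A' | measurable A' /\ tm_nat (NA_card (A' `&` B j))].
suff : <<s E >> `<=` H by rewrite Egen => mH /mH[].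
rewrite {}/H; apply: (lambda_system_subset EI) => //; last first.
  move=> A' EA'; split; first exact: measurable_E.
  by apply: trace_measurable_NA_card_E; [exact: EI|move=> M /finAB].
split => //.
- split; first exact: measurableT.
  by rewrite setTI; apply: trace_measurable_NA_card_E => // M; apply.
- move=> A1 A2 A21 [mA1 tA1] [mA2 tA2]; split; first exact: measurableD.
  move=> n; apply: trace_measurable_eq (trace_measurable_nat_comp2 subn tA1 tA2 n).
  move=> M finM; rewrite /NA_card /= -fcardD; [|exact: finAB|by move=> x [[/A21]]].
  suff -> : (A1 `\` A2) `&` B j `&` proj1_sig M =
    (A1 `&` B j `&` proj1_sig M) `\` (A2 `&` B j `&` proj1_sig M) by [].
  by apply/seteqP; split => x /=; tauto.
- move=> F ndF tF; split; first by apply: bigcupT_measurable => i; case: (tF i).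
  move=> n; apply: trace_measurable_eq (@trace_measurable_eventually _ CSE (finite_on B)
    (fun i => NA_card (F i `&` B j)) n (fun i => (tF i).2 n)).
  move=> M finM; rewrite setI_bigcupl /= -NA_eq_nondecreasing_bigcup.
  + by symmetry; apply: fcard_eqI; rewrite -setI_bigcupl; exact: finAB.
  + move=> i k ik; apply/subsetPset; apply: setSI; exact: nondecreasing_seq_subset.
  + by move=> i; exact: finAB.
Qed.

Let finite_on_D N M : finite_on B M -> finite_set (D N `&` proj1_sig M).
Proof.
move=> finM; rewrite -bigcup_mkord setI_bigcupl.
by apply: bigcup_finite (finite_II N) _ => j _; exact: finM.
Qed.

Lemma trace_measurable_NA_card_partial N A :
  measurable A -> tm_nat (NA_card (A `&` D N)).
Proof.
elim: N A => [|N IH] A mA n.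
  apply: trace_measurable_eq (trace_measurable_cst _ (0 = n)%N) => M _ /=.
  by rewrite big_ord0 setI0 /NA_card set0I /fcard fset_set0 cardfs0.
have mD : measurable (D N) by apply: bigsetU_measurable => j _; exact: measurable_E.
apply: trace_measurable_eq (trace_measurable_nat_comp2 addn (IH A mA)
  (trace_measurable_NA_card_piece N (measurableD mA mD)) n) => M finM /=.
rewrite /NA_card -fcardU.
- suff -> : A `&` D N.+1 `&` proj1_sig M =
    A `&` D N `&` proj1_sig M `|` (A `\` D N) `&` B N `&` proj1_sig M by [].
  rewrite big_ord_recr /=; apply/seteqP; split => x /=.
    by case: (pselect (D N x)) => ? [[? [?|?]] ?]; tauto.
  by move=> [[[? ?] ?]|[[[? ?] ?] ?]]; split => //; split => //; [left|right].
- by apply: sub_finite_set (finite_on_D N finM) => x [[_ ?] ?].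
- by apply: (@finite_on_subset _ _ N finM) => x [].
- by apply/seteqP; split => x // [[[_ ?] _] [[[_ ?] _] _]].
Qed.

Let D_cover : \bigcup_N D N = setT.
Proof.
rewrite -Bcover; apply/seteqP; split => x [N _]; first exact: bigsetU_bigcup.
by move=> BNx; exists N.+1 => //; exact: (bigsetU_sup (ltnSn N)).
Qed.

Lemma trace_measurable_NA_eq A k :
  measurable A -> tm [set M | NA_eq A (proj1_sig M) k].
Proof.
move=> mA; have tm_fin n : tm [set M | NA_eq A (proj1_sig M) (Some n)].
  apply: trace_measurable_eq (@trace_measurable_eventually _ CSE (finite_on B)
    (fun N => NA_card (A `&` D N)) n (fun N => trace_measurable_NA_card_partial N mA n)).
  move=> M finM; rewrite -[A in NA_eq A]setIT -D_cover setI_bigcupr.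
  apply: NA_eq_nondecreasing_bigcup => [N N' NN'|N].
    by apply/subsetPset; apply: setIS; exact: subset_bigsetU.
  by apply: sub_finite_set (finite_on_D N finM) => x [[_ ?] ?].
case: k => [n|]; first exact: tm_fin.
apply: trace_measurable_eq (trace_measurableC (trace_measurable_bigcup tm_fin)) => M _.
split => [AMinf [n _ AMn]|nAMn /finite_setP[n AMn]]; first by apply: AMinf; exists n.
by apply: nAMn; exists n.
Qed.

Lemma trace_measurable_Csigma Y : Csigma Y -> tm Y.
Proof.
apply: smallest_sub; first exact: trace_measurable_sigma_algebra.
by move=> _ [A [k [mA ->]]]; exact: trace_measurable_NA_eq.
Qed.

End cylinder_trace.

Theorem theorem1p1 (d : measure_display) (S : measurableType d)
  (d' : measure_display) (Om : measurableType d') (R : realType)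
  (P : probability Om R) (E : set (set S))
  (hEI : setI_closed E) (hEgen : <<s E >> = @measurable d S)
  (pi1 pi2 : Om -> CS S) (h1 : crset pi1) (h2 : crset pi2)
  (hs1 : sigma_finite_on E pi1) (hs2 : sigma_finite_on E pi2)
  (hfd : forall (n : nat) (A : nat -> set S) (k : nat -> natinf),
     (0 < n)%N -> (forall i, (i < n)%N -> E (A i)) ->
     law P pi1 [set M : CS S | forall i, (i < n)%N -> NA_eq (A i) (proj1_sig M) (k i)]
     = law P pi2 [set M : CS S | forall i, (i < n)%N -> NA_eq (A i) (proj1_sig M) (k i)]) :
  forall B : set (CS S), Csigma B -> law P pi1 B = law P pi2 B.
Proof.
move=> Y CY.
have [B [EB Bcover fin1 fin2]] := sigma_finite_on_common_cover hEI hs1 hs2.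
have [Z mZ YZ] := trace_measurable_Csigma hEI hEgen EB Bcover CY.
have cylinder_Cs : <<s cylinder E >> `<=` Csigma.
  by apply: cylinder_Csigma; rewrite -hEgen; exact: sub_sigma_algebra.
rewrite /law (trace_preimage fin1 YZ) (trace_preimage fin2 YZ).
apply: (@preimage_probability_unique _ _ _ P _ _ pi1 pi2
  (@cylinder_setI_closed _ _ E) _ _ _ Z mZ).
- by move=> A /cylinder_Cs; exact: h1.
- by move=> A /cylinder_Cs; exact: h2.
- move=> _ [[|n] [A [k [EA ->]]]]; last exact: hfd.
  by rewrite (_ : [set M | _] = setT) //; apply/seteqP; split.
Qed.
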